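(* Let $\Phi=\vec a_1\wedge\cdots\wedge\vec a_m$, and let $\hat\Phi$ be its pruned formula. For $1\le M\le m$ define $$\Delta(M)=\mathbb{E}\left[\log\frac{Z(\hat\Phi_1(M,m-M))}{Z(\hat\Phi_1(M-1,m-M))}\cdot\log\frac{Z(\hat\Phi_2(M,m-M))}{Z(\hat\Phi_2(M-1,m-M))}\right],$$ $$\Delta'(M)=\mathbb{E}\left[\log\frac{Z(\hat\Phi_1(M-1,m-M+1))}{Z(\hat\Phi_1(M-1,m-M))}\cdot\log\frac{Z(\hat\Phi_2(M-1,m-M+1))}{Z(\hat\Phi_2(M-1,m-M))}\right].$$ Then $$\mathrm{Var}[\log Z(\hat\Phi)]=\sum_{M=1}^m\big(\Delta(M)-\Delta'(M)\big).$$
   Context: A 2-CNF is a conjunction of clauses, each the disjunction of two literals on two distinct variables. $Z(\cdot)$ denotes the number of satisfying assignments. Fix $0<d<2$ and $m=m_n\sim dn/2$. A uniformly random clause is drawn uniformly from the $4\binom n2$ clauses on two distinct variables among $x_1,\dots,x_n$. Let $(\vec a_i)_{i\ge1}$, $(\vec a'_i)_{i\ge1}$, $(\vec a''_i)_{i\ge1}$ be mutually independent sequences of independent uniformly random clauses. For integers $M,M'\ge0$ set $$\Phi_1(M,M')=\vec a_1\wedge\cdots\wedge\vec a_M\wedge\vec a'_1\wedge\cdots\wedge\vec a'_{M'},\qquad \Phi_2(M,M')=\vec a_1\wedge\cdots\wedge\vec a_M\wedge\vec a''_1\wedge\cdots\wedge\vec a''_{M'}.$$ Write $\hat\Phi_h(M,M')$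 for the pruned formula of $\Phi_h(M,M')$. Pruning is defined as follows. For a 2-CNF $\Psi$ and a set $\mathcal L_0$ of literals, let $\mathcal L(\Psi,\mathcal L_0)$ be the closure of $\mathcal L_0$ under: if $\Psi$ has a clause $l\vee\neg l'$ with $l'\in\mathcal L$, add $l$. Let $\mathcal V_0$ be the set of variables $x$ with both $x,\neg x\in\mathcal L(\Psi,\mathcal L_0)$. The conflict clauses $\mathcal C(\Psi,\mathcal L_0)$ are the clauses of $\Psi$ both of whose variables lie in $\mathcal V_0$. Then $\hat\Psi$ is $\Psi$ with all clauses in $\bigcup_l\mathcal C(\Psi,\{l\})$ removed, $l$ ranging over all literals. Pruned formulas are always satisfiable. *)

From Stdlib Require Import Reals.
From mathcomp Require Import all_boot.
Set Implicit Arguments. Unset Strict Implicit. Unset Printing Implicit Defensive.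

Section TwoCNF.
Variable n : nat.

(* A literal on x_1..x_n: (x, true) is the positive literal x, (x, false) is ~x. *)
Definition lit := ('I_n * bool)%type.
Definition negl (l : lit) : lit := (l.1, ~~ l.2).

(* A clause on two distinct variables: (i, j, si, sj) with i < j, standing for
   the disjunction of the literals (i,si) and (j,sj).  There are exactly
   4 * 'C(n,2) of them. *)
Definition clause := {c : 'I_n * 'I_n * bool * bool | (c.1.1.1 < c.1.1.2)%N}.
Definition lit1 (c : clause) : lit := ((val c).1.1.1, (val c).1.2).
Definition lit2 (c : clause) : lit := ((val c).1.1.2, (val c).2).

Definition cnf := seq clause.

Definition assignment := {ffun 'I_n -> bool}.
Definition lit_sat (s : assignment) (l : lit) : bool := s l.1 == l.2.
Definition clause_sat (s : assignment) (c : clause) : bool :=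
  lit_sat s (lit1 c) || lit_sat s (lit2 c).
Definition cnf_sat (s : assignment) (F : cnf) : bool := all (clause_sat s) F.

Definition Z (F : cnf) : nat := #|[set s : assignment | cnf_sat s F]|.

(* One closure step: if F has a clause l \/ ~l' and l' is in the set, add l. *)
Definition implies (F : cnf) : rel lit := fun l' l =>
  has (fun c => ((lit1 c == l) && (lit2 c == negl l'))
             || ((lit2 c == l) && (lit1 c == negl l'))) F.

(* L(F, L0): closure of L0 under the rule above = literals reachable from L0. *)
Definition closureL (F : cnf) (L0 : {set lit}) : {set lit} :=
  [set l | [exists l0 in L0, connect (implies F) l0 l]].

Definition V0 (F : cnf) (L0 : {set lit}) : {set 'I_n} :=
  [set x | ((x, true) \in closureL F L0) && ((x, false) \in closureL F L0)].

Definition conflict (F : cnf) (L0 : {set lit}) (c : clause) : bool :=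
  (c \in F) && ((lit1 c).1 \in V0 F L0) && ((lit2 c).1 \in V0 F L0).

Definition prune (F : cnf) : cnf :=
  [seq c <- F | ~~ [exists l : lit, conflict F [set l] c]].

(* The probability space: three independent sequences of m uniform clauses
   (only the first m clauses of each sequence are ever used). *)
Definition Omega (m : nat) := (m.-tuple clause * m.-tuple clause * m.-tuple clause)%type.

Definition Expect (m : nat) (f : Omega m -> R) : R :=
  Rdiv (\big[Rplus/R0]_(w <- enum {: Omega m}) f w) (INR #|{: Omega m}|).

Definition Var (m : nat) (f : Omega m -> R) : R :=
  Rminus (Expect (fun w => Rmult (f w) (f w))) (Rmult (Expect f) (Expect f)).

Definition Phi1 (m : nat) (w : Omega m) (M M' : nat) : cnf :=
  take M w.1.1 ++ take M' w.1.2.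
Definition Phi2 (m : nat) (w : Omega m) (M M' : nat) : cnf :=
  take M w.1.1 ++ take M' w.2.

Definition logratio (F G : cnf) : R := ln (Rdiv (INR (Z F)) (INR (Z G))).

Definition DeltaM (m M : nat) : R :=
  Expect (fun w : Omega m =>
    Rmult (logratio (prune (Phi1 w M (m - M))) (prune (Phi1 w M.-1 (m - M))))
          (logratio (prune (Phi2 w M (m - M))) (prune (Phi2 w M.-1 (m - M))))).

Definition DeltaM' (m M : nat) : R :=
  Expect (fun w : Omega m =>
    Rmult (logratio (prune (Phi1 w M.-1 (m - M).+1)) (prune (Phi1 w M.-1 (m - M))))
          (logratio (prune (Phi2 w M.-1 (m - M).+1)) (prune (Phi2 w M.-1 (m - M))))).

Definition logZhat (m : nat) (w : Omega m) : R := ln (INR (Z (prune w.1.1))).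

End TwoCNF.

(* Pruning removes every clause through which a literal implies its own
   negation, and a 2-CNF without such an implication chain is satisfiable by
   unit propagation; so all the Z's are positive and each log-ratio is a
   difference of values of f(s) = log Z(prune s).  Let X_k be the conditional
   expectation of f given the first k clauses (the Doob martingale).  As Phi_1
   and Phi_2 share only their first clauses and have independent tails,
   Delta(M) = E[(X_M - Y)^2] and Delta'(M) = E[(X_(M-1) - Y)^2] for one Y
   depending on the first M-1 clauses only.  Orthogonality of martingale
   increments makes the difference E[X_M^2] - E[X_(M-1)^2], which telescopes
   to Var f. *)

From Pilot Require Import Defs.
From Stdlib Require Import Reals.
From mathcomp Require Import all_boot all_algebra ring.
From mathcomp Require Import Rstruct.
Set Implicit Arguments. Unset Strict Implicit. Unset Printing Implicit Defensive.

Section Implication.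
Variable n : nat.
Implicit Types (F G : cnf n) (l a b : lit n).

Local Notation reach F := (connect (Defs.implies F)).

Lemma neglK : involutive (@negl n).
Proof. by case=> x b; rewrite /negl /= negbK. Qed.

Lemma negl_neq l : negl l != l.
Proof. by case: l => x [] /=; rewrite /negl xpair_eqE eqxx. Qed.

Lemma implies_contra F a b : Defs.implies F a b -> Defs.implies F (negl b) (negl a).
Proof.
move=> /hasP [c cF ab]; apply/hasP; exists c => //; rewrite neglK.
by case/orP: ab => /andP [-> ->]; rewrite ?orbT.
Qed.

Lemma reach_contra F a b : reach F a b -> reach F (negl b) (negl a).
Proof.
move=> /connectP [p ab_p ->] {b}; elim: p a ab_p => [|b p IHp] a /=.
  by rewrite connect0.
by case/andP=> /implies_contra ab /IHp bp; apply: connect_trans bp (connect1 ab).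
Qed.

Lemma reach_subset F G : {subset F <= G} -> forall a b, reach F a b -> reach G a b.
Proof.
move=> sFG; apply: connect_sub => a b /hasP [c /sFG cG ab].
by apply: connect1; apply/hasP; exists c.
Qed.

Lemma implies_clause F c : c \in F ->
  Defs.implies F (negl (lit1 c)) (lit2 c) && Defs.implies F (negl (lit2 c)) (lit1 c).
Proof. by move=> cF; apply/andP; split; apply/hasP; exists c; rewrite // neglK !eqxx ?orbT. Qed.

Definition consistent F := forall l, ~~ reach F l (negl l).

Lemma consistent_subset F G : {subset F <= G} -> consistent G -> consistent F.
Proof. by move=> sFG consG l; apply: contra (consG l); apply: reach_subset. Qed.

Section Propagation.
Variables (F : cnf n) (x : lit n).
Hypothesis consF : consistent F.

Definition touched (v : 'I_n) := reach F x (v, true) || reach F x (v, false).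

Definition propagate (s : assignment n) : assignment n :=
  [ffun v => if reach F x (v, true) then true else if reach F x (v, false) then false else s v].

Lemma reach_neg l : reach F x l -> ~~ reach F x (negl l).
Proof.
move=> xl; apply: contra (consF x) => /reach_contra; rewrite neglK.
exact: connect_trans.
Qed.

Lemma touched_lit l : touched l.1 = reach F x l || reach F x (negl l).
Proof. by case: l => v []; rewrite /touched // orbC. Qed.

Variable s : assignment n.

Lemma propagate_reach l : reach F x l -> lit_sat (propagate s) l.
Proof.
case: l => v b xl; rewrite /lit_sat ffunE /=.
case: b xl => [-> // | xl]; have /negbTE -> := reach_neg xl.
by rewrite xl.
Qed.

Lemma propagate_touched c : c \in F -> touched (lit1 c).1 || touched (lit2 c).1 ->
  clause_sat (propagate s) c.
Proof.
move=> /implies_clause /andP [e12 e21]; rewrite /clause_sat !touched_lit.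
case/orP=> /orP [] xl.
- by rewrite propagate_reach.
- by rewrite (propagate_reach (connect_trans xl (connect1 e12))) orbT.
- by rewrite (propagate_reach xl) orbT.
- by rewrite (propagate_reach (connect_trans xl (connect1 e21))).
Qed.

Lemma propagate_untouched c : ~~ touched (lit1 c).1 -> ~~ touched (lit2 c).1 ->
  clause_sat s c -> clause_sat (propagate s) c.
Proof.
rewrite /clause_sat /lit_sat !ffunE.
by rewrite /touched !negb_or => /andP [/negbTE -> /negbTE ->] /andP [/negbTE -> /negbTE ->].
Qed.

End Propagation.

Theorem consistent_sat F : consistent F -> exists s, cnf_sat s F.
Proof.
elim: {F}_.+1 {-2}F (ltnSn (size F)) => // k IHk [|c F] szF consF.
  by exists [ffun=> true].
set x := lit1 c.
pose G := [seq c' <- c :: F |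
  ~~ touched (c :: F) x (lit1 c').1 && ~~ touched (c :: F) x (lit2 c').1].
have x_touched : touched (c :: F) x x.1 by rewrite touched_lit connect0.
have szG : (size G < k)%N.
  by rewrite /G /= x_touched /= size_filter (leq_ltn_trans (count_size _ _)).
have [s sG] : exists s, cnf_sat s G.
  by apply: IHk szG _; apply: consistent_subset consF => c'; rewrite mem_filter => /andP [].
exists (propagate (c :: F) x s); apply/allP => c' c'F.
have [c'G | ] := boolP (c' \in G).
  move: (c'G); rewrite mem_filter => /andP [/andP [t1 t2] _].
  exact: propagate_untouched t1 t2 (allP sG c' c'G).
rewrite mem_filter c'F andbT negb_and !negbK.
exact: propagate_touched.
Qed.

Lemma mem_closureL1 F l l' : (l' \in closureL F [set l]) = reach F l l'.
Proof.
rewrite inE; apply/existsP/idP => [[l0 /andP [/set1P -> //]] | ll'].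
by exists l; rewrite set11.
Qed.

Lemma reach_V0 F l a : reach F l a -> reach F l (negl a) -> a.1 \in V0 F [set l].
Proof. by case: a => v [] la lna; rewrite inE !mem_closureL1 la lna. Qed.

Lemma prune_subset F : {subset prune F <= F}.
Proof. by move=> c; rewrite mem_filter => /andP []. Qed.

Lemma prune_consistent F : consistent (prune F).
Proof.
move=> l; apply/negP => /connectP [[|y p] /= path_p last_p].
  by move/eqP: last_p; rewrite (negbTE (negl_neq l)).
case/andP: path_p => /hasP [c c_pruned ly] path_p.
have yl : reach F y (negl l).
  by apply: (reach_subset (@prune_subset F)); apply/connectP; exists p.
have ly' : reach F l y.
  by apply: (reach_subset (@prune_subset F)); apply/connect1/hasP; exists c.
have Vy : y.1 \in V0 F [set l].
  by apply: reach_V0 ly' _; move/reach_contra: yl; rewrite neglK.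
have Vl : l.1 \in V0 F [set l] := reach_V0 (connect0 _ _) (connect_trans ly' yl).
have cF : c \in F := prune_subset c_pruned.
move: c_pruned; rewrite mem_filter => /andP [/existsP []]; exists l.
by rewrite /conflict cF; case/orP: ly => /andP [/eqP-> /eqP->]; rewrite Vy Vl.
Qed.

Lemma Z_prune_gt0 F : (0 < Defs.Z (prune F))%N.
Proof.
have [s sF] := consistent_sat (@prune_consistent F).
by rewrite card_gt0; apply/set0Pn; exists s; rewrite inE.
Qed.

End Implication.

Import GRing.Theory Num.Theory.
Local Open Scope ring_scope.

Section Average.
Variables (R : numFieldType) (T : finType).
Implicit Types (F G X Y : seq T -> R) (c : R).

Fixpoint avg (k : nat) F : R :=
  if k is k.+1 then (\sum_(x : T) avg k (fun s => F (x :: s))) / #|T|%:R else F [::].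

Lemma eq_avg k F G : (forall s, size s = k -> F s = G s) -> avg k F = avg k G.
Proof.
elim: k F G => [|k IHk] F G eqFG /=; first exact: eqFG.
congr (_ / _); apply: eq_bigr => x _; apply: IHk => s size_s.
by apply: eqFG; rewrite /= size_s.
Qed.

Lemma avgD k F G : avg k (fun s => F s + G s) = avg k F + avg k G.
Proof.
elim: k F G => [|k IHk] F G //=.
by rewrite -mulrDl -big_split; congr (_ / _); apply: eq_bigr => x _; apply: IHk.
Qed.

Lemma avgB k F G : avg k (fun s => F s - G s) = avg k F - avg k G.
Proof.
elim: k F G => [|k IHk] F G //=.
by rewrite -mulrBl -sumrB; congr (_ / _); apply: eq_bigr => x _; apply: IHk.
Qed.

Lemma avgMl k c F : avg k (fun s => c * F s) = c * avg k F.
Proof.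
elim: k F => [|k IHk] F //=.
by rewrite mulrA mulr_sumr; congr (_ / _); apply: eq_bigr => x _; apply: IHk.
Qed.

Lemma avgMr k c F : avg k (fun s => F s * c) = avg k F * c.
Proof. by under eq_avg do rewrite mulrC; rewrite avgMl mulrC. Qed.

Lemma avg_cat j k F : avg (j + k) F = avg j (fun s => avg k (fun t => F (s ++ t))).
Proof.
elim: j F => [|j IHj] F //=.
by congr (_ / _); apply: eq_bigr => x _; apply: IHj.
Qed.

Hypothesis T_gt0 : (0 < #|T|)%N.

Lemma card_neq0 : #|T|%:R != 0 :> R.
Proof. by rewrite pnatr_eq0 -lt0n. Qed.

Lemma avg_cst k c : avg k (fun=> c) = c.
Proof.
elim: k => [|k IHk] //=.
by rewrite IHk sumr_const -[c *+ _]/(c *+ #|T|) -(mulr_natr c) mulfK ?card_neq0.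
Qed.

Lemma sum_tuple_avg k F : \sum_(t : k.-tuple T) F t = #|T|%:R ^+ k * avg k F.
Proof.
elim: k F => [|k IHk] F /=.
  by rewrite (big_pred1 [tuple]) ?expr0 ?mul1r // => t; apply/esym/eqP/tuple0.
pose cons_tuple (p : T * k.-tuple T) := [tuple of p.1 :: p.2].
have cons_bij : {on predT, bijective cons_tuple}.
  exists (fun t : k.+1.-tuple T => (thead t, [tuple of behead t])) => [[x t] _ | t _] /=.
    by rewrite theadE; congr pair; apply: val_inj.
  by rewrite [RHS](tuple_eta t).
rewrite (reindex cons_tuple cons_bij) -(pair_bigA _ (fun x (t : k.-tuple T) => F (x :: t))) /=.
under eq_bigr => x _ do rewrite (IHk (fun s => F (x :: s))).
by rewrite -mulr_sumr exprSr -mulrA [_ * (_ / _)]mulrC mulfVK ?card_neq0.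
Qed.

Lemma avg_take m k F : (k <= m)%N -> avg m (fun s => F (take k s)) = avg k F.
Proof.
move=> le_km; rewrite -(subnKC le_km) avg_cat.
by apply: eq_avg => s size_s; under eq_avg do rewrite take_size_cat //; rewrite avg_cst.
Qed.

Lemma avg_mul_take m r X Y : (r <= m)%N ->
  avg m (fun s => avg m (fun t => X (take r s) * Y (take r t))) = avg r X * avg r Y.
Proof.
move=> le_rm; under eq_avg do rewrite avgMl (avg_take Y le_rm).
by rewrite avgMr avg_take.
Qed.

Lemma avg_sqr_shift k F c :
  avg k (fun s => (F s - c) ^+ 2) - (avg k F - c) ^+ 2 =
  avg k (fun s => F s ^+ 2) - avg k F ^+ 2.
Proof.
rewrite (eq_avg (G := fun s => F s ^+ 2 - c *+ 2 * F s + c ^+ 2)) => [|s _]; last by ring.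
by rewrite avgD avgB avgMl !avg_cst; ring.
Qed.

Definition cond_avg r F s := avg r (fun t => F (s ++ t)).

Lemma cond_avg0 F s : cond_avg 0 F s = F s.
Proof. by rewrite /cond_avg /= cats0. Qed.

Lemma avg_cond_avg r F s : avg 1 (fun u => cond_avg r F (s ++ u)) = cond_avg r.+1 F s.
Proof.
rewrite /cond_avg -[r.+1]add1n avg_cat.
by apply: eq_avg => u _; apply: eq_avg => t _; rewrite catA.
Qed.

Definition doob_moment2 m F k := avg k (fun s => cond_avg (m - k) F s ^+ 2).

Lemma doob_moment2_increment m F p (g : seq T -> R) : (p < m)%N ->
  avg m (fun a => (cond_avg (m - p.+1) F (take p.+1 a) - g (take p a)) ^+ 2)
  - avg m (fun a => (cond_avg (m - p.+1).+1 F (take p a) - g (take p a)) ^+ 2)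
  = doob_moment2 m F p.+1 - doob_moment2 m F p.
Proof.
move=> lt_pm; rewrite /doob_moment2 -(subnSK lt_pm); set r := (m - p.+1)%N.
pose Psi s := (cond_avg r F s - g (take p s)) ^+ 2
              - (cond_avg r.+1 F (take p s) - g (take p s)) ^+ 2.
rewrite -avgB (eq_avg (G := fun a => Psi (take p.+1 a))) => [|a _]; last first.
  by rewrite /Psi take_takel.
rewrite avg_take // -[p.+1]addn1 !avg_cat -avgB; apply: eq_avg => s size_s.
rewrite (eq_avg (G := fun u =>
  (cond_avg r F (s ++ u) - g s) ^+ 2 - (cond_avg r.+1 F s - g s) ^+ 2)) => [|u _].
  by rewrite avgB avg_cst -avg_cond_avg avg_sqr_shift.
by rewrite /Psi -size_s take_size_cat.
Qed.

Lemma avg_var_doob m F :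
  avg m (fun s => F s ^+ 2) - avg m F ^+ 2 =
  \sum_(0 <= p < m) (doob_moment2 m F p.+1 - doob_moment2 m F p).
Proof.
rewrite telescope_sumr // /doob_moment2 subnn subn0; congr (_ - _).
by apply: eq_avg => s _; rewrite cond_avg0.
Qed.

Theorem avg_var_decomposition m F :
  avg m (fun s => F s ^+ 2) - avg m F ^+ 2 =
  \sum_(1 <= M < m.+1)
    (avg m (fun a =>
       (cond_avg (m - M) F (take M a) - cond_avg (m - M) F (take M.-1 a)) ^+ 2)
     - avg m (fun a =>
       (cond_avg (m - M).+1 F (take M.-1 a) - cond_avg (m - M) F (take M.-1 a)) ^+ 2)).
Proof.
rewrite avg_var_doob big_add1 /=; apply: eq_big_nat => p /andP [_ lt_pm].
by rewrite (doob_moment2_increment F (cond_avg (m - p.+1) F)).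
Qed.

End Average.

Section RandomTwoCNF.
Variable n : nat.
Hypothesis n_ge2 : (1 < n)%N.

Lemma card_clause_gt0 : (0 < #|{: clause n}|)%N.
Proof.
have n_gt0 : (0 < n)%N by apply: ltnW.
by apply/card_gt0P; exists (exist _ (Ordinal n_gt0, Ordinal n_ge2, true, true) (erefl true)).
Qed.

Definition logZ_prune (F : cnf n) : R := ln (INR (Defs.Z (prune F))).

Lemma logratio_prune (F G : cnf n) :
  logratio (prune F) (prune G) = logZ_prune F - logZ_prune G.
Proof.
have Z_pos (H : cnf n) : Rlt 0 (INR (Defs.Z (prune H))) by apply/lt_0_INR/ltP/Z_prune_gt0.
by rewrite /logratio /Rdiv ln_mult ?ln_Rinv //; apply: Rinv_0_lt_compat.
Qed.

Lemma Expect_avg m (f : Omega n m -> R) (h : cnf n -> cnf n -> cnf n -> R) :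
  (forall w, f w = h w.1.1 w.1.2 w.2) ->
  Expect f = avg m (fun a => avg m (fun b => avg m (fun c => h a b c))).
Proof.
move=> fE; rewrite /Expect RdivE INRE.
rewrite -[\big[Rplus/R0]_(_ <- _) _]/(\sum_(w <- enum {: Omega n m}) f w) big_enum /=.
under eq_bigr do rewrite fE.
pose A := {: m.-tuple (clause n)}.
rewrite -(pair_bigA _ (fun (ab : A * A) (c : A) => h ab.1 ab.2 c)).
rewrite -(pair_bigA _ (fun a b : A => \sum_(c : A) h a b c)) /=.
have sumE := sum_tuple_avg (R := R) card_clause_gt0.
under eq_bigr => a _ do under eq_bigr => b _ do rewrite (sumE m (h a b)).
under eq_bigr => a _ do rewrite -mulr_sumr (sumE m (fun b => avg m (h a b))).
rewrite -!mulr_sumr (sumE m (fun a => avg m (fun b => avg m (h a b)))).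
rewrite !card_prod card_tuple !natrM natrX.
by field; rewrite expf_neq0 // card_neq0 // card_clause_gt0.
Qed.

Lemma Expect_avg1 m (f : Omega n m -> R) (g : cnf n -> R) :
  (forall w, f w = g w.1.1) -> Expect f = avg m g.
Proof.
move=> fE; rewrite (Expect_avg (h := fun a _ _ => g a)) //.
by apply: eq_avg => a _; rewrite !(avg_cst card_clause_gt0).
Qed.

Lemma Var_logZhat m :
  Var (logZhat (n := n) (m := m)) =
  avg m (fun F => logZ_prune F ^+ 2) - avg m logZ_prune ^+ 2.
Proof.
rewrite /Var (Expect_avg1 (g := fun F => logZ_prune F ^+ 2)) //.
by rewrite (Expect_avg1 (g := logZ_prune)).
Qed.

Lemma DeltaM_avg m M : DeltaM n m M =
  avg m (fun a => (cond_avg (m - M) logZ_prune (take M a)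
                   - cond_avg (m - M) logZ_prune (take M.-1 a)) ^+ 2).
Proof.
pose X a t := logZ_prune (take M a ++ t) - logZ_prune (take M.-1 a ++ t).
rewrite /DeltaM (Expect_avg (h := fun a b c =>
  X a (take (m - M) b) * X a (take (m - M) c))); last first.
  by move=> w; rewrite /Phi1 /Phi2 !logratio_prune.
apply: eq_avg => a _.
by rewrite (avg_mul_take card_clause_gt0 (X a) (X a) (leq_subr _ _)) avgB expr2.
Qed.

Lemma DeltaM'_avg m M : (0 < M <= m)%N -> DeltaM' n m M =
  avg m (fun a => (cond_avg (m - M).+1 logZ_prune (take M.-1 a)
                   - cond_avg (m - M) logZ_prune (take M.-1 a)) ^+ 2).
Proof.
case/andP=> M_gt0 le_Mm.
have lt_rm : (m - M < m)%N by rewrite ltn_subrL M_gt0 (leq_trans M_gt0 le_Mm).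
pose X a t := logZ_prune (take M.-1 a ++ t) - logZ_prune (take M.-1 a ++ take (m - M) t).
rewrite /DeltaM' (Expect_avg (h := fun a b c =>
  X a (take (m - M).+1 b) * X a (take (m - M).+1 c))); last first.
  by move=> w; rewrite /Phi1 /Phi2 !logratio_prune /X !take_takel.
apply: eq_avg => a _.
rewrite (avg_mul_take card_clause_gt0 (X a) (X a) lt_rm) avgB.
by rewrite (avg_take card_clause_gt0 (fun t => logZ_prune (take M.-1 a ++ t))) ?expr2.
Qed.

End RandomTwoCNF.

Theorem lemma2p4 (d : R) (mseq : nat -> nat) :
  Rlt R0 d /\ Rlt d (INR 2) ->
  Un_cv (fun k => Rdiv (INR (mseq k)) (Rdiv (Rmult d (INR k)) (INR 2))) R1 ->
  forall n : nat, (2 <= n)%N ->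
  Var (logZhat (n := n) (m := mseq n)) =
  \big[Rplus/R0]_(1 <= M < (mseq n).+1)
     Rminus (DeltaM n (mseq n) M) (DeltaM' n (mseq n) M).
Proof.
move=> _ _ n n_ge2.
rewrite (Var_logZhat n_ge2) (avg_var_decomposition (card_clause_gt0 n_ge2)).
apply: eq_big_nat => M M_range.
by rewrite (DeltaM_avg n_ge2) (DeltaM'_avg n_ge2).
Qed.
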